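(* Let $Q=S^1\times S^1$ with angular coordinates $(\psi,\varphi)$ on a neighborhood $U$ of $(0,0)$, let $A,B,C,D_1,D_2>0$ be constants with $AC>B^2$, and consider $$\mathfrak H(\psi,\varphi,p_\psi,p_\varphi)=\frac{1}{2m(\psi,\varphi)}\big(Cp_\psi^2-2B\cos(\psi-\varphi)p_\psi p_\varphi+Ap_\varphi^2\big),\quad m=AC-B^2\cos^2(\psi-\varphi),$$ $h(\psi,\varphi)=D_1\cos\psi+D_2\cos\varphi$, and $W=\mathrm{span}\{\mathrm d\varphi\}$. For a constant $\gamma\notin\{-1,A/B\}$ set $x=\psi$, $y=\varphi+\gamma\psi$ and $b:=B\cos((1+\gamma)x-y)$. Then, shrinking $U$ if necessary, $\hat W:=(\mathbb F\mathfrak H)^{-1}(\mathrm{span}\{\partial/\partial x\})$ is a complement of $W$; the projection $\hat{\mathfrak p}$ onto $\hat W$ along $W$ satisfies $\hat{\mathfrak p}(\mathrm dx)=\frac{1}{A-\gamma b}\sigma$, $\hat{\mathfrak p}(\mathrm dy)=\frac{\gamma}{A-\gamma b}\sigma$ with $\sigma:=(\mathbb F\mathfrak H)^{-1}(\partial/\partial x)$; and for every quadratic form $\mathfrak K$ on $\hat W$, writing $\mathfrak K(a\sigma)=\tfrac12K a^2$ with $K>0$, the function $u:=\big(\frac{\partial h}{\partial x}\hat P^1+\frac{\partial h}{\partial y}\hat P^2\big)K$ (where $\hat P^1=\frac{1}{A-\gamma b}$, $\hat P^2=\frac{\gamma}{A-\gamma b}$) equals $u(x,y)=-\frac{D_1\sin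 x}{A-\gamma b}K(x,y)$. Consequently $\frac{\partial u}{\partial y}(0,0)=0$ and $\frac{\partial u}{\partial x}(0,0)=\frac{-D_1K(0,0)}{A-\gamma B}$, which is positive if and only if $\gamma>A/B$; hence, when $\mathfrak K$ solves the kinetic equation, the solution $\hat h(x,y)=\int_0^xu(t,y)\,\mathrm dt+\frac{\varpi}{2}y^2$ of the potential equation has a critical point with positive-definite Hessian at $(0,0)$ if and only if $\gamma>A/B$ and $\varpi>0$.
   Context: A quadratic form on a subbundle $V\subseteq T^*Q$ is $\mathfrak F(\alpha)=\tfrac12\langle\alpha,\rho^\sharp(\alpha)\rangle$ with $\rho$ a smooth positive-definite fibered inner product on $V^*$. $\mathbb F\mathfrak H:T^*Q\to TQ$ is the fiber derivative, $\langle\beta,\mathbb F\mathfrak H(\alpha)\rangle=\frac{d}{dt}\mathfrak H(\alpha+t\beta)|_{t=0}$, a bundle isomorphism. A complement of $W$ is a subbundle $\hat W$ with $T^*Q=\hat W\oplus W$. The kinetic equation for $\mathfrak K$ is $\{\mathfrak K\circ\hat{\mathfrak p},\mathfrak H\}(\sigma)=0$ for all $\sigma\in\hat W$ ($\{\cdot,\cdot\}$ the canonical Poisson bracket), and the potential equation for $\hat h:Q\to\mathbb R$ is $\big(\mathrm d\hat h\circ\mathbb F\mathfrak H-\mathrm dh\circ\mathbb F(\mathfrak K\circ\hat{\mathfrak p})\big)(\sigma)=0$ for all $\sigma\in\hat W$, which in the coordinates $(x,y)$ reads $\partial\hat h/\partial x=u$. Functions are identified with their local representatives in the coordinates $(x,y)$.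 *)

From Stdlib Require Export Reals Lra ClassicalEpsilon.
Open Scope R_scope.

(* Everything is stated in the chart: base points of Q near (0,0) are given
   by angular coordinates (psi, phi), resp. by (x, y) with
   x = psi, y = phi + gamma psi.
   Covectors at a point are pairs (p_psi, p_phi) = components in the basis
   (d psi, d phi); tangent vectors are pairs (v_psi, v_phi) = components in the
   basis (d/d psi, d/d phi). *)

Definition vec := (R * R)%type.

Definition vadd (a b : vec) : vec := (fst a + fst b, snd a + snd b).
Definition vsub (a b : vec) : vec := (fst a - fst b, snd a - snd b).
Definition vscale (c : R) (a : vec) : vec := (c * fst a, c * snd a).
Definition pairing (alpha v : vec) : R := fst alpha * fst v + snd alpha * snd v.

Definition mass (A B C psi phi : R) : R := A * C - B ^ 2 * (cos (psi - phi)) ^ 2.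

Definition Ham (A B C psi phi ppsi pphi : R) : R :=
  / (2 * mass A B C psi phi) *
  (C * ppsi ^ 2 - 2 * B * cos (psi - phi) * ppsi * pphi + A * pphi ^ 2).

Definition hpot (D1 D2 psi phi : R) : R := D1 * cos psi + D2 * cos phi.

Definition FiberDeriv (A B C psi phi : R) (alpha v : vec) : Prop :=
  forall beta : vec,
    derivable_pt_lim
      (fun t => Ham A B C psi phi (fst alpha + t * fst beta) (snd alpha + t * snd beta))
      0 (pairing beta v).

(* coordinate objects of the chart (x,y) = (psi, phi + gamma psi),
   written in the (psi,phi)-bases *)
Definition dx_cov : vec := (1, 0).            (* dx = d psi *)
Definition dy_cov (gamma : R) : vec := (gamma, 1). (* dy = gamma d psi + d phi *)
Definition ddx_vec (gamma : R) : vec := (1, - gamma). (* d/dx = d/dpsi - gamma d/dphi *)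

Definition InW (beta : vec) : Prop := exists c : R, beta = (0, c).

Definition InWhat (A B C gamma psi phi : R) (beta : vec) : Prop :=
  exists c : R, FiberDeriv A B C psi phi beta (vscale c (ddx_vec gamma)).

Definition IsComplement (A B C gamma psi phi : R) : Prop :=
  (forall alpha : vec, exists beta : vec,
      InWhat A B C gamma psi phi beta /\ InW (vsub alpha beta)) /\
  (forall beta : vec, InWhat A B C gamma psi phi beta -> InW beta -> beta = (0, 0)).

Definition IsProjHat (A B C gamma psi phi : R) (alpha beta : vec) : Prop :=
  InWhat A B C gamma psi phi beta /\ InW (vsub alpha beta).

Definition bfun (B gamma x y : R) : R := B * cos ((1 + gamma) * x - y).
Definition P1 (A B gamma x y : R) : R := / (A - gamma * bfun B gamma x y).
Definition P2 (A B gamma x y : R) : R := gamma / (A - gamma * bfun B gamma x y).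

Definition in_box (e x y : R) : Prop := Rabs x < e /\ Rabs y < e.

(* partial derivatives (value chosen classically; meaningful when they exist) *)
Definition pdx (f : R -> R -> R) (x y : R) : R :=
  epsilon (inhabits 0) (fun l => derivable_pt_lim (fun t => f t y) x l).
Definition pdy (f : R -> R -> R) (x y : R) : R :=
  epsilon (inhabits 0) (fun l => derivable_pt_lim (fun t => f x t) y l).

Definition hxy (D1 D2 gamma x y : R) : R := hpot D1 D2 x (y - gamma * x).

Definition ufun (A B D1 D2 gamma : R) (K : R -> R -> R) (x y : R) : R :=
  (pdx (hxy D1 D2 gamma) x y * P1 A B gamma x y
   + pdy (hxy D1 D2 gamma) x y * P2 A B gamma x y) * K x y.

Definition cont2_at (f : R -> R -> R) (x y : R) : Prop :=
  forall e, 0 < e -> exists d, 0 < d /\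
    forall x' y', Rabs (x' - x) < d -> Rabs (y' - y) < d ->
      Rabs (f x' y' - f x y) < e.

CoInductive SmoothOn (e : R) (f : R -> R -> R) : Prop :=
| smooth_intro (fx fy : R -> R -> R) :
    (forall x y, in_box e x y ->
       cont2_at f x y /\
       derivable_pt_lim (fun t => f t y) x (fx x y) /\
       derivable_pt_lim (fun t => f x t) y (fy x y)) ->
    SmoothOn e fx -> SmoothOn e fy -> SmoothOn e f.

Definition PBzero (F G : R -> R -> R -> R -> R) (q1 q2 p1 p2 : R) : Prop :=
  exists Fq1 Fq2 Fp1 Fp2 Gq1 Gq2 Gp1 Gp2 : R,
    derivable_pt_lim (fun t => F t q2 p1 p2) q1 Fq1 /\
    derivable_pt_lim (fun t => F q1 t p1 p2) q2 Fq2 /\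
    derivable_pt_lim (fun t => F q1 q2 t p2) p1 Fp1 /\
    derivable_pt_lim (fun t => F q1 q2 p1 t) p2 Fp2 /\
    derivable_pt_lim (fun t => G t q2 p1 p2) q1 Gq1 /\
    derivable_pt_lim (fun t => G q1 t p1 p2) q2 Gq2 /\
    derivable_pt_lim (fun t => G q1 q2 t p2) p1 Gp1 /\
    derivable_pt_lim (fun t => G q1 q2 p1 t) p2 Gp2 /\
    Fq1 * Gp1 + Fq2 * Gp2 - Fp1 * Gq1 - Fp2 * Gq2 = 0.

(* Kinetic equation for the quadratic form KK on What with KK(a sigma) = 1/2 K a^2,
   sigma = (FH)^{-1}(d/dx): F below is KK o phat (uniquely determined on the box),
   and {KK o phat, H}(beta) = 0 for all beta in What over the box. *)
Definition KineticEq (A B C gamma e : R) (K : R -> R -> R) : Prop :=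
  exists F : R -> R -> R -> R -> R,
    (forall psi phi ppsi pphi, in_box e psi (phi + gamma * psi) ->
       forall (s : vec) (a : R),
         FiberDeriv A B C psi phi s (ddx_vec gamma) ->
         IsProjHat A B C gamma psi phi (ppsi, pphi) (vscale a s) ->
         F psi phi ppsi pphi = / 2 * K psi (phi + gamma * psi) * a ^ 2) /\
    (forall psi phi, in_box e psi (phi + gamma * psi) ->
       forall beta : vec, InWhat A B C gamma psi phi beta ->
         PBzero F (Ham A B C) psi phi (fst beta) (snd beta)).

(* (x0,y0) is a critical point of f with positive-definite Hessian.
   Hessian entries: f_xx, f_xy := d/dy (df/dx), f_yy (symmetric Hessian). *)
Definition CritPD (f : R -> R -> R) (x0 y0 : R) : Prop :=
  exists (d : R) (fx : R -> R -> R) (fy : R -> R) (hxx hxy hyy : R),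
    0 < d /\
    (forall x y, Rabs (x - x0) < d -> Rabs (y - y0) < d ->
       derivable_pt_lim (fun t => f t y) x (fx x y)) /\
    (forall y, Rabs (y - y0) < d -> derivable_pt_lim (fun t => f x0 t) y (fy y)) /\
    fx x0 y0 = 0 /\ fy y0 = 0 /\
    derivable_pt_lim (fun t => fx t y0) x0 hxx /\
    derivable_pt_lim (fun t => fx x0 t) y0 hxy /\
    derivable_pt_lim fy y0 hyy /\
    (forall v1 v2, (v1 <> 0 \/ v2 <> 0) ->
       0 < hxx * v1 ^ 2 + 2 * hxy * v1 * v2 + hyy * v2 ^ 2).

(* The fiber derivative of the Hamiltonian is the linear map with matrix
   [[C, -B c], [-B c, A]] / m, where c = cos (psi - phi), whose inverse is
   [[A, B c], [B c, C]].  Hence sigma = (FH)^{-1}(d/dx) = (A - gamma B c, B c - gamma C),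
   and W-hat = span{sigma} is a complement of W = span{d phi} exactly when the first
   component A - gamma b of sigma does not vanish, which holds near (0,0) because
   gamma <> A/B.  The projection along W then only has to match the first
   component, giving phat(alpha) = alpha_psi / (A - gamma b) * sigma.
   In the chart, dh/dx P^1 + dh/dy P^2 collapses to -D1 sin x / (A - gamma b), and
   since h-hat(0, y) = varpi y^2 / 2 and u(0, y) = 0 the Hessian of h-hat at the
   origin is diagonal with entries du/dx(0,0) and varpi. *)
From Stdlib Require Import Reals Lra.
From Coquelicot Require Import Coquelicot.
Open Scope R_scope.

Lemma derivable_pt_lim_epsilon (f : R -> R) x l : derivable_pt_lim f x l ->
  epsilon (inhabits 0) (fun l => derivable_pt_lim f x l) = l.
Proof.
  intro Hl.
  apply (uniqueness_limite f x); [| exact Hl].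
  exact (epsilon_spec (inhabits 0) (fun l => derivable_pt_lim f x l) (ex_intro _ l Hl)).
Qed.

Lemma derivable_pt_lim_locally_eq (f g : R -> R) x l d : 0 < d ->
  (forall t, Rabs (t - x) < d -> f t = g t) ->
  derivable_pt_lim f x l -> derivable_pt_lim g x l.
Proof.
  intros Hd Hfg Hf e He. destruct (Hf e He) as [del Hdel].
  assert (Hmin : 0 < Rmin del d) by (apply Rmin_pos; [apply cond_pos | lra]).
  exists (mkposreal _ Hmin). intros h hne hlt. simpl in hlt.
  pose proof (Rmin_l del d). pose proof (Rmin_r del d).
  rewrite <- !Hfg.
  - apply Hdel; auto; lra.
  - rewrite Rminus_diag, Rabs_R0; lra.
  - replace (x + h - x) with h by ring; lra.
Qed.

Lemma vscale_1 v : vscale 1 v = v.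
Proof. destruct v. unfold vscale; simpl. rewrite !Rmult_1_l. reflexivity. Qed.

Section FiberDerivative.

Variables A B C psi phi : R.
Hypothesis HAC : B ^ 2 < A * C.

Let c := cos (psi - phi).
Let m := mass A B C psi phi.

Lemma mass_pos : 0 < m.
Proof.
  unfold m, mass. fold c. pose proof (COS_bound (psi - phi)) as Hc. fold c in Hc.
  assert (c ^ 2 <= 1) by nra. nra.
Qed.

Definition fiber_deriv_map (p : vec) : vec :=
  (/ m * (C * fst p - B * c * snd p), / m * (- (B * c) * fst p + A * snd p)).

Lemma FiberDeriv_fiber_deriv_map p : FiberDeriv A B C psi phi p (fiber_deriv_map p).
Proof.
  intro beta. pose proof mass_pos as Hm.
  apply is_derive_Reals. unfold Ham. fold m. auto_derive; auto.
  unfold pairing, fiber_deriv_map, c; simpl. field. lra.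
Qed.

Lemma FiberDeriv_iff p v : FiberDeriv A B C psi phi p v <-> v = fiber_deriv_map p.
Proof.
  split; [intro Hv | intros ->; apply FiberDeriv_fiber_deriv_map].
  pose proof (FiberDeriv_fiber_deriv_map p) as Hp.
  pose proof (uniqueness_limite _ _ _ _ (Hv (1, 0)) (Hp (1, 0))) as E1.
  pose proof (uniqueness_limite _ _ _ _ (Hv (0, 1)) (Hp (0, 1))) as E2.
  destruct v as [v1 v2]. unfold pairing, fiber_deriv_map in *; simpl in *.
  ring_simplify in E1. ring_simplify in E2.
  f_equal; [rewrite E1 | rewrite E2]; ring.
Qed.

Lemma fiber_deriv_map_inv p v : fiber_deriv_map p = v ->
  p = (A * fst v + B * c * snd v, B * c * fst v + C * snd v).
Proof.
  intros <-. pose proof mass_pos as Hm. unfold m, mass in Hm. fold c in Hm.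
  destruct p as [p1 p2]. unfold fiber_deriv_map, m, mass; simpl. fold c.
  f_equal; field; lra.
Qed.

Definition sigma_vec (gamma : R) : vec := (A - gamma * (B * c), B * c - gamma * C).

Lemma FiberDeriv_scale_ddx_iff gamma k beta :
  FiberDeriv A B C psi phi beta (vscale k (ddx_vec gamma)) <->
  beta = vscale k (sigma_vec gamma).
Proof.
  rewrite FiberDeriv_iff. split.
  - intro Hv. symmetry in Hv. apply fiber_deriv_map_inv in Hv. rewrite Hv.
    unfold vscale, ddx_vec, sigma_vec; simpl. f_equal; ring.
  - intros ->. pose proof mass_pos as Hm. unfold m, mass in Hm. fold c in Hm.
    unfold fiber_deriv_map, vscale, ddx_vec, sigma_vec, m, mass; simpl. fold c.
    f_equal; field; lra.
Qed.

Lemma FiberDeriv_ddx_iff gamma s :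
  FiberDeriv A B C psi phi s (ddx_vec gamma) <-> s = sigma_vec gamma.
Proof.
  rewrite <- (vscale_1 (ddx_vec gamma)), FiberDeriv_scale_ddx_iff, vscale_1.
  reflexivity.
Qed.

Lemma InWhat_iff gamma beta :
  InWhat A B C gamma psi phi beta <-> exists k, beta = vscale k (sigma_vec gamma).
Proof.
  split; intros [k Hk]; exists k; apply FiberDeriv_scale_ddx_iff; exact Hk.
Qed.

Section Complement.

Variable gamma : R.
Let d := A - gamma * (B * c).
Hypothesis Hd : d <> 0.

Lemma IsProjHat_sigma alpha :
  IsProjHat A B C gamma psi phi alpha (vscale (fst alpha / d) (sigma_vec gamma)).
Proof.
  split; [apply InWhat_iff; eexists; reflexivity |].
  exists (snd alpha - fst alpha / d * snd (sigma_vec gamma)).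
  unfold vsub, vscale, sigma_vec; simpl. fold d. f_equal. field. exact Hd.
Qed.

Lemma IsComplement_of_denominator : IsComplement A B C gamma psi phi.
Proof.
  split.
  - intro alpha. eexists. apply IsProjHat_sigma.
  - intros beta Hb [c' Hc']. apply InWhat_iff in Hb as [k ->].
    unfold vscale, sigma_vec in *; simpl in *. fold d in Hc'.
    injection Hc' as Hk _.
    destruct (Rmult_integral _ _ Hk) as [-> | Hd0]; [| contradiction].
    f_equal; ring.
Qed.

Lemma IsProjHat_coordinate_covectors s :
  FiberDeriv A B C psi phi s (ddx_vec gamma) ->
  IsProjHat A B C gamma psi phi dx_cov (vscale (/ d) s) /\
  IsProjHat A B C gamma psi phi (dy_cov gamma) (vscale (gamma / d) s).
Proof.
  rewrite FiberDeriv_ddx_iff. intros ->. rewrite <- Rdiv_1_l.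
  exact (conj (IsProjHat_sigma dx_cov) (IsProjHat_sigma (dy_cov gamma))).
Qed.

End Complement.

End FiberDerivative.

Lemma Rabs_1_minus_cos_le t : Rabs (1 - cos t) <= Rabs t.
Proof.
  destruct (MVT_abs cos (fun c => - sin c) 0 t) as [c [Hc _]].
  { intros c _. apply derivable_pt_lim_cos. }
  rewrite cos_0, Rminus_0_r in Hc.
  rewrite <- Rabs_Ropp, Ropp_minus_distr, Hc, Rabs_Ropp.
  pose proof (SIN_bound c). pose proof (Rabs_pos t).
  assert (Rabs (sin c) <= 1) by (apply Rabs_le; lra). nra.
Qed.

Lemma shifted_cos_neq0 a b t : Rabs b * Rabs t < Rabs (a - b) -> a - b * cos t <> 0.
Proof.
  intros Hlt Hz.
  assert (E : a - b = - (b * (1 - cos t))) by lra.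
  rewrite E, Rabs_Ropp, Rabs_mult in Hlt.
  pose proof (Rabs_1_minus_cos_le t). pose proof (Rabs_pos b). nra.
Qed.

(* Chosen so that |gamma B| * |(1 + gamma) x - y| < |A - gamma B| on the box. *)
Definition chart_radius (A B gamma : R) : R :=
  Rabs (A - gamma * B) / ((Rabs (gamma * B) + 1) * (Rabs (1 + gamma) + 1)).

Lemma chart_radius_pos A B gamma : A - gamma * B <> 0 -> 0 < chart_radius A B gamma.
Proof.
  intro Hq. unfold chart_radius. pose proof (Rabs_pos (gamma * B)).
  pose proof (Rabs_pos (1 + gamma)). pose proof (Rabs_pos_lt _ Hq).
  apply Rdiv_lt_0_compat; nra.
Qed.

Lemma Rabs_chart_angle_le gamma e x y :
  in_box e x y -> Rabs ((1 + gamma) * x - y) <= (Rabs (1 + gamma) + 1) * e.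
Proof.
  intros [Hx Hy]. unfold Rminus.
  eapply Rle_trans; [apply Rabs_triang |].
  rewrite Rabs_Ropp, Rabs_mult. pose proof (Rabs_pos (1 + gamma)). nra.
Qed.

Lemma chart_denominator_neq0 A B gamma x y : A - gamma * B <> 0 ->
  in_box (chart_radius A B gamma) x y -> A - gamma * bfun B gamma x y <> 0.
Proof.
  intros Hq Hbox. unfold bfun. rewrite <- Rmult_assoc.
  apply shifted_cos_neq0.
  set (t := (1 + gamma) * x - y). set (b := Rabs (gamma * B)).
  pose proof (Rabs_chart_angle_le gamma _ _ _ Hbox) as Ht. fold t in Ht.
  pose proof (Rabs_pos_lt _ Hq). pose proof (Rabs_pos (1 + gamma)).
  assert (Hb : 0 <= b) by apply Rabs_pos.
  assert (Hprod : b * ((Rabs (1 + gamma) + 1) * chart_radius A B gamma)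
                  = Rabs (A - gamma * B) * (b / (b + 1))).
  { unfold chart_radius. fold b. field. split; lra. }
  assert (b / (b + 1) < 1) by (apply Rmult_lt_reg_r with (b + 1); [lra |];
                                field_simplify; lra).
  apply Rle_lt_trans with (b * ((Rabs (1 + gamma) + 1) * chart_radius A B gamma)).
  - apply Rmult_le_compat_l; assumption.
  - rewrite Hprod. nra.
Qed.

Lemma bfun_chart B gamma x y : bfun B gamma x y = B * cos (x - (y - gamma * x)).
Proof. unfold bfun. f_equal. f_equal. ring. Qed.

Lemma pdx_hxy D1 D2 gamma x y :
  pdx (hxy D1 D2 gamma) x y = - D1 * sin x + gamma * D2 * sin (y - gamma * x).
Proof.
  apply derivable_pt_lim_epsilon, is_derive_Reals. unfold hxy, hpot.
  auto_derive; auto. unfold Rminus. ring.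
Qed.

Lemma pdy_hxy D1 D2 gamma x y : pdy (hxy D1 D2 gamma) x y = - D2 * sin (y - gamma * x).
Proof.
  apply derivable_pt_lim_epsilon, is_derive_Reals. unfold hxy, hpot.
  auto_derive; auto. unfold Rminus. ring.
Qed.

Lemma ufun_closed_form A B D1 D2 gamma K x y :
  ufun A B D1 D2 gamma K x y = - (D1 * sin x) / (A - gamma * bfun B gamma x y) * K x y.
Proof. unfold ufun, P1, P2. rewrite pdx_hxy, pdy_hxy. unfold Rdiv. ring. Qed.

Lemma ufun_y_axis A B D1 D2 gamma K y : ufun A B D1 D2 gamma K 0 y = 0.
Proof. rewrite ufun_closed_form, sin_0. unfold Rdiv. ring. Qed.

Lemma ufun_derivable_y_at_0 A B D1 D2 gamma K :
  derivable_pt_lim (fun t => ufun A B D1 D2 gamma K 0 t) 0 0.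
Proof.
  apply (derivable_pt_lim_locally_eq (fun _ => 0)) with (d := 1); [lra | | ].
  - intros t _. symmetry. apply ufun_y_axis.
  - apply derivable_pt_lim_const.
Qed.

Lemma ufun_derivable_x_at_0 A B D1 D2 gamma K kx : A - gamma * B <> 0 ->
  derivable_pt_lim (fun t => K t 0) 0 kx ->
  derivable_pt_lim (fun t => ufun A B D1 D2 gamma K t 0) 0 (- D1 * K 0 0 / (A - gamma * B)).
Proof.
  intros Hq HK.
  set (f := fun t => - (D1 * sin t) / (A - gamma * bfun B gamma t 0)).
  assert (Hf : derivable_pt_lim f 0 (- D1 / (A - gamma * B))).
  { apply is_derive_Reals. unfold f, bfun. auto_derive;
      replace ((1 + gamma) * 0 + - 0) with 0 by ring; rewrite ?sin_0, cos_0.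
    - replace (A + - (gamma * (B * 1))) with (A - gamma * B) by ring. exact Hq.
    - field. exact Hq. }
  apply (derivable_pt_lim_locally_eq (f * (fun t => K t 0))%F) with (d := 1); [lra | | ].
  - intros t _. unfold mult_fct, f. symmetry. apply ufun_closed_form.
  - replace (- D1 * K 0 0 / (A - gamma * B)) with
      (- D1 / (A - gamma * B) * K 0 0 + f 0 * kx).
    + exact (derivable_pt_lim_mult _ _ _ _ _ Hf HK).
    + unfold f. rewrite sin_0. unfold Rdiv. ring.
Qed.

Lemma neg_div_pos_iff p a b gamma : 0 < p -> 0 < b ->
  0 < - p / (a - gamma * b) <-> a / b < gamma.
Proof.
  intros Hp Hb. unfold Rdiv.
  assert (Ea : a = a / b * b) by (field; lra).
  destruct (Rtotal_order (a - gamma * b) 0) as [Hn | [Hz | Hn]].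
  - pose proof (Rinv_lt_0_compat _ Hn). rewrite Ea in Hn. split; intro; nra.
  - rewrite Hz, Rinv_0, Rmult_0_r. rewrite Ea in Hz.
    assert (a / b = gamma) by nra. lra.
  - pose proof (Rinv_0_lt_compat _ Hn). rewrite Ea in Hn. split; intro; nra.
Qed.

Section DiagonalHessian.

Variables (f u : R -> R -> R) (e a w : R).
Hypothesis He : 0 < e.
Hypothesis Hfx : forall x y, in_box e x y -> derivable_pt_lim (fun t => f t y) x (u x y).
Hypothesis Hf0 : forall y, Rabs y < e -> f 0 y = w / 2 * y ^ 2.
Hypothesis Hu0 : u 0 0 = 0.
Hypothesis Hux : derivable_pt_lim (fun t => u t 0) 0 a.
Hypothesis Huy : derivable_pt_lim (fun t => u 0 t) 0 0.

Lemma derivable_pt_lim_y_axis y : Rabs y < e -> derivable_pt_lim (fun t => f 0 t) y (w * y).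
Proof.
  intro Hy.
  apply (derivable_pt_lim_locally_eq (fun t => w / 2 * t ^ 2)) with (d := e - Rabs y).
  - lra.
  - intros t Ht. symmetry. apply Hf0.
    pose proof (Rabs_triang (t - y) y). replace (t - y + y) with t in * by ring. lra.
  - apply is_derive_Reals. auto_derive; auto. field.
Qed.

Lemma derivable_pt_lim_scal_id : derivable_pt_lim (fun y => w * y) 0 w.
Proof. apply is_derive_Reals. auto_derive; auto. ring. Qed.

Lemma CritPD_diag_pos : CritPD f 0 0 -> 0 < a /\ 0 < w.
Proof.
  intros [d [fx [fy [hxx [? [hyy
    [Hd [Hfx' [Hfy' [_ [_ [Hxx [_ [Hyy Hpd]]]]]]]]]]]]]].
  pose proof (Rmin_l d e). pose proof (Rmin_r d e).
  assert (Hr : 0 < Rmin d e) by (apply Rmin_pos; lra).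
  set (r := Rmin d e) in *.
  assert (Ew : hyy = w).
  { apply (uniqueness_limite (fun y => w * y) 0); [| exact derivable_pt_lim_scal_id].
    apply (derivable_pt_lim_locally_eq fy) with (d := r); [exact Hr | | exact Hyy].
    intros y Hy. rewrite Rminus_0_r in Hy.
    apply (uniqueness_limite (fun t => f 0 t) y).
    - apply Hfy'. rewrite Rminus_0_r. lra.
    - apply derivable_pt_lim_y_axis. lra. }
  assert (Ea : hxx = a).
  { apply (uniqueness_limite (fun t => u t 0) 0); [| exact Hux].
    apply (derivable_pt_lim_locally_eq (fun t => fx t 0)) with (d := r); [exact Hr | | exact Hxx].
    intros t Ht. rewrite Rminus_0_r in Ht.
    apply (uniqueness_limite (fun s => f s 0) t).
    - apply Hfx'; rewrite Rminus_0_r; [| rewrite Rabs_R0]; lra.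
    - apply Hfx. split; [| rewrite Rabs_R0]; lra. }
  pose proof (Hpd 1 0 (or_introl R1_neq_R0)) as Pa.
  pose proof (Hpd 0 1 (or_intror R1_neq_R0)) as Pw.
  split; [rewrite <- Ea | rewrite <- Ew]; nra.
Qed.

Lemma CritPD_of_diag_pos : 0 < a -> 0 < w -> CritPD f 0 0.
Proof.
  intros Ha Hw.
  exists e, u, (fun y => w * y), a, 0, w.
  repeat split.
  - exact He.
  - intros x y Hx Hy. apply Hfx. rewrite !Rminus_0_r in *. split; assumption.
  - intros y Hy. rewrite Rminus_0_r in Hy. apply derivable_pt_lim_y_axis, Hy.
  - exact Hu0.
  - ring.
  - exact Hux.
  - exact Huy.
  - exact derivable_pt_lim_scal_id.
  - intros v1 v2 Hv.
    assert (0 < v1 ^ 2 \/ 0 < v2 ^ 2) by (destruct Hv; [left | right]; nra).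
    nra.
Qed.

Lemma CritPD_diag_iff : CritPD f 0 0 <-> 0 < a /\ 0 < w.
Proof.
  split; [exact CritPD_diag_pos | intros [Ha Hw]; exact (CritPD_of_diag_pos Ha Hw)].
Qed.

End DiagonalHessian.

Theorem mainTheorem10 (A B C D1 D2 gamma : R) :
  0 < A -> 0 < B -> 0 < C -> 0 < D1 -> 0 < D2 -> B ^ 2 < A * C ->
  gamma <> -1 -> gamma <> A / B ->
  exists eps : R, 0 < eps /\
    (forall x y : R, in_box eps x y ->
       IsComplement A B C gamma x (y - gamma * x) /\
       (exists s : vec, FiberDeriv A B C x (y - gamma * x) s (ddx_vec gamma)) /\
       (forall s : vec, FiberDeriv A B C x (y - gamma * x) s (ddx_vec gamma) ->
          IsProjHat A B C gamma x (y - gamma * x) dx_cov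
            (vscale (/ (A - gamma * bfun B gamma x y)) s) /\
          IsProjHat A B C gamma x (y - gamma * x) (dy_cov gamma)
            (vscale (gamma / (A - gamma * bfun B gamma x y)) s))) /\
    (forall K : R -> R -> R,
       SmoothOn eps K -> (forall x y, in_box eps x y -> 0 < K x y) ->
       (forall x y, in_box eps x y ->
          ufun A B D1 D2 gamma K x y
          = - (D1 * sin x) / (A - gamma * bfun B gamma x y) * K x y) /\
       derivable_pt_lim (fun t => ufun A B D1 D2 gamma K 0 t) 0 0 /\
       derivable_pt_lim (fun t => ufun A B D1 D2 gamma K t 0) 0
         (- D1 * K 0 0 / (A - gamma * B)) /\
       (0 < - D1 * K 0 0 / (A - gamma * B) <-> A / B < gamma) /\
       (KineticEq A B C gamma eps K ->
        forall (w : R) (hh : R -> R -> R),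
          (forall x y, in_box eps x y ->
             derivable_pt_lim (fun t => hh t y) x (ufun A B D1 D2 gamma K x y)) ->
          (forall y, Rabs y < eps -> hh 0 y = w / 2 * y ^ 2) ->
          (CritPD hh 0 0 <-> A / B < gamma /\ 0 < w))).
Proof.
  intros _ HB _ HD1 _ HAC _ HgAB.
  assert (Hq : A - gamma * B <> 0).
  { intro Hz. apply HgAB. field_simplify_eq; lra. }
  exists (chart_radius A B gamma). split; [apply chart_radius_pos, Hq |]. split.
  - intros x y Hbox.
    pose proof (chart_denominator_neq0 _ _ _ _ _ Hq Hbox) as Hd.
    rewrite bfun_chart in *.
    split; [| split].
    + apply IsComplement_of_denominator; assumption.
    + exists (sigma_vec A B C x (y - gamma * x) gamma). apply FiberDeriv_ddx_iff; auto.
    + apply IsProjHat_coordinate_covectors; assumption.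
  - intros K [? ? HK _ _] Hpos.
    assert (H00 : in_box (chart_radius A B gamma) 0 0)
      by (split; rewrite Rabs_R0; apply chart_radius_pos, Hq).
    destruct (HK 0 0 H00) as [_ [HKx _]].
    pose proof (ufun_derivable_x_at_0 A B D1 D2 gamma K _ Hq HKx) as Hux.
    assert (Hsign : 0 < - D1 * K 0 0 / (A - gamma * B) <-> A / B < gamma).
    { rewrite <- Ropp_mult_distr_l. apply neg_div_pos_iff; [| exact HB].
      apply Rmult_lt_0_compat; [exact HD1 | exact (Hpos 0 0 H00)]. }
    split; [intros x y _; apply ufun_closed_form |].
    split; [apply ufun_derivable_y_at_0 |].
    split; [exact Hux |]. split; [exact Hsign |].
    intros _ w hh Hhx Hh0.
    rewrite (CritPD_diag_iff hh (ufun A B D1 D2 gamma K) _ _ w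
               (chart_radius_pos _ _ _ Hq) Hhx Hh0 (ufun_y_axis _ _ _ _ _ _ _) Hux
               (ufun_derivable_y_at_0 _ _ _ _ _ _)).
    rewrite Hsign. tauto.
Qed.
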